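(* The 2-functors $(-)^1\colon\mathrm{Cat}^{H,\mathrm{shifts}}\to\mathrm{ModCat}_H$ and $(-)^\bullet\colon\mathrm{ModCat}_H\to\mathrm{Cat}^{H,\mathrm{shifts}}$ are well-defined 2-functors and form a 2-equivalence. Explicitly, there are 2-natural isomorphisms $\nu\colon((-)^\bullet)^1\Rightarrow\mathrm{id}$ with components $\nu_{(\mathcal C,\alpha)}$ the identity on objects and $f\mapsto f\circ\epsilon^\alpha_X$ on morphisms $f\in\mathrm{Hom}_{\mathcal C}(\alpha^1X,Y)$ (with trivial structure isomorphisms), and $\eta\colon((-)^1)^\bullet\Rightarrow\mathrm{id}$ with components $\eta_{\mathcal C}$ the identity on objects and $f\mapsto f\circ r_{X,h}$ on $f\in\mathrm{Hom}^1_{\mathcal C}(X\langle h\rangle,Y)$.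
   Context: $R$ is a nonzero commutative ring and $H$ a group. An $H$-Hom-graded category is an $R$-linear category $\mathcal C$ with $\mathrm{Hom}(X,Y)=\bigoplus_{h\in H}\mathrm{Hom}^h(X,Y)$, identities of degree 1, composition $\mathrm{Hom}^{h'}\times\mathrm{Hom}^h\to\mathrm{Hom}^{h'h}$; $\mathcal C^1$ is its degree-1 subcategory. A shift of $X$ by $a$ is an object $X\langle a\rangle$ with a degree-$a$ isomorphism $r_{X,a}\colon X\to X\langle a\rangle$. $\mathrm{Cat}^{H,\mathrm{shifts}}$ is the 2-category of $H$-Hom-graded categories admitting all shifts (each with a fixed choice of shifts), degree-preserving $R$-linear functors, and natural transformations with degree-1 components. An $H$-module category $(\mathcal C,\alpha)$: $R$-linear autoequivalences $\alpha^h$ with natural isos $\epsilon\colon\mathrm{id}\Rightarrow\alpha^1$, $\mu_{a,b}\colon\alpha^a\alpha^b\Rightarrow\alpha^{ab}$, $\mu_{1,h}(\epsilon\alpha^h)=\mathrm{id}=\mu_{h,1}(\alpha^h\epsilon)$, $\mu_{ab,c}(\mu_{a,b}\alpha^c)=\mu_{a,bc}(\alpha^a\mu_{b,c})$. An $H$-module functor $(F,s)\colon(\mathcal C,\alpha)\to(\mathcal D,\beta)$: $R$-linear $F$ with natural isos $s^h\colon\beta^hF\Rightarrow F\alpha^h$, $s^1_X\epsilon^\beta_{FX}=F\epsilon^\alpha_X$, $F(\mu^\alpha_{a,b})_X\,s^a_{\alpha^bX}\,\beta^a(s^b_X)=s^{ab}_X(\mu^\beta_{a,b})_{FX}$. An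 $H$-module natural transformation $\eta\colon(E,r)\Rightarrow(F,s)$: $R$-linear $\eta\colon E\Rightarrow F$ with $\eta_{\alpha^hX}r^h_X=s^h_X\beta^h(\eta_X)$. Composition $(E,r)\circ(F,s)=(EF,\ X\mapsto E(s^h_X)\circ r^h_{FX})$. $\mathrm{ModCat}_H$ is the resulting 2-category. The 2-functor $(-)^1$: $\mathcal C\mapsto(\mathcal C^1,\phi)$ with $\phi^aX=X\langle a\rangle$, $\phi^af=r_{Y,a}fr_{X,a}^{-1}$, $\epsilon_X=r_{X,1}$, $(\mu_{a,b})_X=r_{X,ab}r_{X,b}^{-1}r_{X\langle b\rangle,a}^{-1}$; $F\mapsto(F^1,s_F)$ with $(s^a_F)_X=F(r_{X,a})r_{FX,a}^{-1}$; $\eta\mapsto\eta$ restricted. The 2-functor $(-)^\bullet$: $(\mathcal C,\alpha)\mapsto(\mathcal C,\alpha)^\bullet$ (same objects, $\mathrm{Hom}^h(X,Y)=\mathrm{Hom}_{\mathcal C}(\alpha^hX,Y)$, $f'\circ^\bullet f=f'\circ\alpha^{h'}f\circ(\mu_{h',h})_X^{-1}$, $\mathrm{id}^\bullet_X=\epsilon_X^{-1}$, shifts $X\langle a\rangle=\alpha^aX$ with $r_{X,a}=\mathrm{id}_{\alpha^aX}$); $(F,s)\mapsto(F,s)^\bullet$ with $X\mapsto FX$ and $f\in\mathrm{Hom}_{\mathcal C}(\alpha^hX,Y)\mapsto Ff\circ s^h_X\in\mathrm{Hom}_{\mathcal D}(\beta^hFX,FY)$; $\eta\mapsto\eta^\bullet$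 with $\eta^\bullet_X=\eta_X\circ(\epsilon^\beta_{EX})^{-1}$. *)

From HB Require Import structures.
From mathcomp Require Import all_boot all_algebra monoid.

Set Implicit Arguments.
Unset Strict Implicit.
Unset Printing Implicit Defensive.

Import GRing.Theory.
Local Open Scope ring_scope.

Section Defs.
Variables (R : comNzRingType) (H : groupType).

Lemma deg_conj (a : H) : ((a * 1) * a^-1 = 1)%g.
Proof. rewrite mulg1; exact: mulgV. Qed.
Lemma deg_mu (a b : H) : (((a * b) * b^-1) * a^-1 = 1)%g.
Proof. by rewrite -(mulgA a) (mulgV b) mulg1; exact: mulgV. Qed.

(*  H-Hom-graded R-linear categories, presented by their homogeneous   *)
(*  components  Hom^h(X,Y) ; Hom(X,Y) is their direct sum.             *)
Record gcat := GCat {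
  gobj : Type;
  ghom : H -> gobj -> gobj -> lmodType R;
  gcomp : forall (a b : H) (X Y Z : gobj),
      ghom a Y Z -> ghom b X Y -> ghom (a * b)%g X Z;
  gid : forall X : gobj, ghom 1%g X X }.

Arguments ghom : clear implicits.
Arguments gcomp {_ _ _ _ _ _} _ _.

Definition gcast (C : gcat) (a b : H) (X Y : gobj C) (e : a = b)
  (f : ghom C a X Y) : ghom C b X Y :=
  eq_rect a (fun h => ghom C h X Y) f b e.

Definition is_gcat (C : gcat) : Prop :=
  [/\ (forall a b X Y Z (k : R) (g g' : ghom C a Y Z) (f : ghom C b X Y),
         gcomp (k *: g + g') f = k *: gcomp g f + gcomp g' f),
      (forall a b X Y Z (k : R) (g : ghom C a Y Z) (f f' : ghom C b X Y),
         gcomp g (k *: f + f') = k *: gcomp g f + gcomp g f'),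
      (forall a b c W X Y Z (h : ghom C a Y Z) (g : ghom C b X Y)
              (f : ghom C c W X),
         gcomp h (gcomp g f) = gcast (esym (mulgA a b c)) (gcomp (gcomp h g) f)),
      (forall a X Y (f : ghom C a X Y), gcast (mul1g a) (gcomp (gid Y) f) = f) &
      (forall a X Y (f : ghom C a X Y), gcast (mulg1 a) (gcomp f (gid X)) = f)].

(* a fixed choice of shifts: X<a> with r_{X,a} : X -> X<a> of degree a,
   together with its inverse (necessarily of degree a^-1) *)
Record shifts (C : gcat) := Shifts {
  shobj : H -> gobj C -> gobj C;
  shr : forall a X, ghom C a X (shobj a X);
  shrinv : forall a X, ghom C (a^-1)%g (shobj a X) X }.

Arguments shobj {_} _ _ _.
Arguments shr {_} _ _ _.
Arguments shrinv {_} _ _ _.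

Definition is_shifts (C : gcat) (s : shifts C) : Prop :=
  forall a X,
    gcast (mulgV a) (gcomp (shr s a X) (shrinv s a X)) = gid (shobj s a X) /\
    gcast (mulVg a) (gcomp (shrinv s a X) (shr s a X)) = gid X.

Record gscat := GSCat { gsc :> gcat; gss : shifts gsc }.

Arguments gss : clear implicits.

Definition is_gscat (C : gscat) : Prop := is_gcat C /\ is_shifts (gss C).

Record gfun (C D : gcat) := GFun {
  gfo : gobj C -> gobj D;
  gfm : forall a X Y, ghom C a X Y -> ghom D a (gfo X) (gfo Y) }.

Arguments gfm {_ _} _ {_ _ _} _.

Definition is_gfun (C D : gcat) (F : gfun C D) : Prop :=
  [/\ (forall a X Y (k : R) (f f' : ghom C a X Y),
         gfm F (k *: f + f') = k *: gfm F f + gfm F f'),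
      (forall a b X Y Z (g : ghom C a Y Z) (f : ghom C b X Y),
         gfm F (gcomp g f) = gcomp (gfm F g) (gfm F f)) &
      (forall X, gfm F (gid X) = gid (gfo F X))].

Definition gfid (C : gcat) : gfun C C := @GFun C C id (fun a X Y f => f).
Definition gfcomp (C D E : gcat) (G : gfun D E) (F : gfun C D) : gfun C E :=
  @GFun C E (fun X => gfo G (gfo F X)) (fun a X Y f => gfm G (gfm F f)).

Definition gnat (C D : gcat) (F G : gfun C D) :=
  forall X, ghom D 1%g (gfo F X) (gfo G X).

Definition is_gnat (C D : gcat) (F G : gfun C D) (t : gnat F G) : Prop :=
  forall a X Y (f : ghom C a X Y),
    gcast (mulg1 a) (gcomp (gfm G f) (t X)) =
    gcast (mul1g a) (gcomp (t Y) (gfm F f)).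

Definition gnid (C D : gcat) (F : gfun C D) : gnat F F := fun X => gid (gfo F X).
Definition gnvcomp (C D : gcat) (F G K : gfun C D) (u : gnat G K) (t : gnat F G)
  : gnat F K := fun X => gcast (mulg1 1%g) (gcomp (u X) (t X)).
Definition gnhcomp (C D E : gcat) (F F' : gfun C D) (G G' : gfun D E)
  (u : gnat G G') (t : gnat F F') : gnat (gfcomp G F) (gfcomp G' F') :=
  fun X => gcast (mulg1 1%g) (gcomp (u (gfo F' X)) (gfm G (t X))).

Record lcat := LCat {
  lobj : Type;
  lhom : lobj -> lobj -> lmodType R;
  lcomp : forall X Y Z : lobj, lhom Y Z -> lhom X Y -> lhom X Z;
  lid : forall X : lobj, lhom X X }.

Arguments lhom : clear implicits.
Arguments lcomp {_ _ _ _} _ _.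

Definition is_lcat (C : lcat) : Prop :=
  [/\ (forall X Y Z (k : R) (g g' : lhom C Y Z) (f : lhom C X Y),
         lcomp (k *: g + g') f = k *: lcomp g f + lcomp g' f),
      (forall X Y Z (k : R) (g : lhom C Y Z) (f f' : lhom C X Y),
         lcomp g (k *: f + f') = k *: lcomp g f + lcomp g f'),
      (forall W X Y Z (h : lhom C Y Z) (g : lhom C X Y) (f : lhom C W X),
         lcomp h (lcomp g f) = lcomp (lcomp h g) f),
      (forall X Y (f : lhom C X Y), lcomp (lid Y) f = f) &
      (forall X Y (f : lhom C X Y), lcomp f (lid X) = f)].

Record lfun (C D : lcat) := LFun {
  lfo : lobj C -> lobj D;
  lfm : forall X Y, lhom C X Y -> lhom D (lfo X) (lfo Y) }.

Arguments lfm {_ _} _ {_ _} _.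

Definition is_lfun (C D : lcat) (F : lfun C D) : Prop :=
  [/\ (forall X Y (k : R) (f f' : lhom C X Y),
         lfm F (k *: f + f') = k *: lfm F f + lfm F f'),
      (forall X Y Z (g : lhom C Y Z) (f : lhom C X Y),
         lfm F (lcomp g f) = lcomp (lfm F g) (lfm F f)) &
      (forall X, lfm F (lid X) = lid (lfo F X))].

Definition lfid (C : lcat) : lfun C C := @LFun C C id (fun X Y f => f).
Definition lfcomp (C D E : lcat) (G : lfun D E) (F : lfun C D) : lfun C E :=
  @LFun C E (fun X => lfo G (lfo F X)) (fun X Y f => lfm G (lfm F f)).

Definition lnat (C D : lcat) (F G : lfun C D) :=
  forall X, lhom D (lfo F X) (lfo G X).

Definition is_lnat (C D : lcat) (F G : lfun C D) (t : lnat F G) : Prop :=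
  forall X Y (f : lhom C X Y), lcomp (lfm G f) (t X) = lcomp (t Y) (lfm F f).

Definition is_lnatiso (C D : lcat) (F G : lfun C D) (t : lnat F G) : Prop :=
  is_lnat t /\
  forall X, exists g : lhom D (lfo G X) (lfo F X),
    lcomp g (t X) = lid (lfo F X) /\ lcomp (t X) g = lid (lfo G X).

Definition is_autoequiv (C : lcat) (F : lfun C C) : Prop :=
  exists G : lfun C C, is_lfun G /\
    (exists t : lnat (lfid C) (lfcomp G F), is_lnatiso t) /\
    (exists t : lnat (lfid C) (lfcomp F G), is_lnatiso t).

(* H-module category (C, alpha); eps, mu are given together with their
   (necessarily unique) inverses *)
Record mcat := MCat {
  mc : lcat;
  mact : H -> lfun mc mc;
  meps : lnat (lfid mc) (mact 1%g);
  mepsinv : lnat (mact 1%g) (lfid mc);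
  mmu : forall a b, lnat (lfcomp (mact a) (mact b)) (mact (a * b)%g);
  mmuinv : forall a b, lnat (mact (a * b)%g) (lfcomp (mact a) (mact b)) }.

Arguments mc : clear implicits.
Arguments mact : clear implicits.
Arguments meps : clear implicits.
Arguments mepsinv : clear implicits.
Arguments mmu : clear implicits.
Arguments mmuinv : clear implicits.

Definition mtr (M : mcat) (Z X : lobj (mc M)) (k k' : H) (e : k = k')
  (f : lhom (mc M) Z (lfo (mact M k) X)) : lhom (mc M) Z (lfo (mact M k') X) :=
  eq_rect k (fun j => lhom (mc M) Z (lfo (mact M j) X)) f k' e.

Definition is_mcat (M : mcat) : Prop :=
  (is_lcat (mc M) /\
      (forall h, is_lfun (mact M h) /\ is_autoequiv (mact M h)) /\
      is_lnat (meps M) /\ is_lnat (mepsinv M) /\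
      (forall a b, is_lnat (mmu M a b) /\ is_lnat (mmuinv M a b)) /\
      (forall X, lcomp (mepsinv M X) (meps M X) = lid X /\
                 lcomp (meps M X) (mepsinv M X) = lid (lfo (mact M 1%g) X)) /\
      (forall a b X, lcomp (mmuinv M a b X) (mmu M a b X)
                       = lid (lfo (mact M a) (lfo (mact M b) X)) /\
                     lcomp (mmu M a b X) (mmuinv M a b X)
                       = lid (lfo (mact M (a * b)%g) X)) /\
      (forall h X,
         lcomp (mmu M 1%g h X) (meps M (lfo (mact M h) X))
         = mtr (esym (mul1g h)) (lid (lfo (mact M h) X)) /\
         lcomp (mmu M h 1%g X) (lfm (mact M h) (meps M X))
         = mtr (esym (mulg1 h)) (lid (lfo (mact M h) X))) /\
      (forall a b c X,
         lcomp (mmu M (a * b)%g c X) (mmu M a b (lfo (mact M c) X))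
         = mtr (mulgA a b c)
             (lcomp (mmu M a (b * c)%g X) (lfm (mact M a) (mmu M b c X))))).

Record mfun (M N : mcat) := MFun {
  mf : lfun (mc M) (mc N);
  ms : forall h, lnat (lfcomp (mact N h) mf) (lfcomp mf (mact M h)) }.

Arguments mf {_ _} _.
Arguments ms {_ _} _ _ _.

Definition is_mfun (M N : mcat) (F : mfun M N) : Prop :=
  [/\ is_lfun (mf F),
      (forall h, is_lnatiso (ms F h)),
      (forall X, lcomp (ms F 1%g X) (meps N (lfo (mf F) X))
                 = lfm (mf F) (meps M X)) &
      (forall a b X,
         lcomp (lfm (mf F) (mmu M a b X))
               (lcomp (ms F a (lfo (mact M b) X)) (lfm (mact N a) (ms F b X)))
         = lcomp (ms F (a * b)%g X) (mmu N a b (lfo (mf F) X)))].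

Definition mfid (M : mcat) : mfun M M :=
  @MFun M M (lfid (mc M)) (fun h X => lid (lfo (mact M h) X)).
Definition mfcomp (M N P : mcat) (E : mfun N P) (F : mfun M N) : mfun M P :=
  @MFun M P (lfcomp (mf E) (mf F))
    (fun h X => lcomp (lfm (mf E) (ms F h X)) (ms E h (lfo (mf F) X))).

Definition mnat (M N : mcat) (E F : mfun M N) := lnat (mf E) (mf F).

Definition is_mnat (M N : mcat) (E F : mfun M N) (t : mnat E F) : Prop :=
  is_lnat t /\
  forall h X, lcomp (t (lfo (mact M h) X)) (ms E h X)
              = lcomp (ms F h X) (lfm (mact N h) (t X)).

Definition mnid (M N : mcat) (F : mfun M N) : mnat F F :=
  fun X => lid (lfo (mf F) X).
Definition mnvcomp (M N : mcat) (E F G : mfun M N) (u : mnat F G) (t : mnat E F)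
  : mnat E G := fun X => lcomp (u X) (t X).
Definition mnhcomp (M N P : mcat) (F F' : mfun M N) (G G' : mfun N P)
  (u : mnat G G') (t : mnat F F') : mnat (mfcomp G F) (mfcomp G' F') :=
  fun X => lcomp (u (lfo (mf F') X)) (lfm (mf G) (t X)).

(*  The 2-functor (-)^1 : Cat^{H,shifts} -> ModCat_H                   *)
Definition one_lcat (C : gscat) : lcat :=
  @LCat (gobj C) (fun X Y => ghom C 1%g X Y)
    (fun X Y Z g f => gcast (mulg1 1%g) (gcomp g f)) (fun X => gid X).

Definition one_act (C : gscat) (a : H) : lfun (one_lcat C) (one_lcat C) :=
  @LFun (one_lcat C) (one_lcat C) (shobj (gss C) a)
    (fun X Y f => gcast (deg_conj a)
        (gcomp (gcomp (shr (gss C) a Y) f) (shrinv (gss C) a X))).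

Definition one_obj (C : gscat) : mcat :=
  @MCat (one_lcat C) (one_act C)
    (fun X => shr (gss C) 1%g X)
    (fun X => gcast (@invg1 H) (shrinv (gss C) 1%g X))
    (fun a b X => gcast (deg_mu a b)
        (gcomp (gcomp (shr (gss C) (a * b)%g X) (shrinv (gss C) b X))
               (shrinv (gss C) a (shobj (gss C) b X))))
    (fun a b X => gcast (mulgV (a * b)%g)
        (gcomp (gcomp (shr (gss C) a (shobj (gss C) b X)) (shr (gss C) b X))
               (shrinv (gss C) (a * b)%g X))).

Definition one_fun (C D : gscat) (F : gfun C D) : mfun (one_obj C) (one_obj D) :=
  @MFun (one_obj C) (one_obj D)
    (@LFun (one_lcat C) (one_lcat D) (gfo F) (fun X Y f => gfm F f))
    (fun a X => gcast (mulgV a)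
        (gcomp (gfm F (shr (gss C) a X)) (shrinv (gss D) a (gfo F X)))).

Definition one_nat (C D : gscat) (F G : gfun C D) (t : gnat F G)
  : mnat (one_fun F) (one_fun G) := t.

(*  The 2-functor (-)^bullet : ModCat_H -> Cat^{H,shifts}              *)
Definition bul_gcat (M : mcat) : gcat :=
  @GCat (lobj (mc M)) (fun h X Y => lhom (mc M) (lfo (mact M h) X) Y)
    (fun a b X Y Z f' f =>
       lcomp f' (lcomp (lfm (mact M a) f) (mmuinv M a b X)))
    (fun X => mepsinv M X).

Definition bul_shifts (M : mcat) : shifts (bul_gcat M) :=
  @Shifts (bul_gcat M) (fun a X => lfo (mact M a) X)
    (fun a X => lid (lfo (mact M a) X))
    (fun a X => lcomp (mepsinv M X) (mtr (mulVg a) (mmu M (a^-1)%g a X))).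

Definition bul_obj (M : mcat) : gscat := @GSCat (bul_gcat M) (bul_shifts M).

Definition bul_fun (M N : mcat) (F : mfun M N) : gfun (bul_obj M) (bul_obj N) :=
  @GFun (bul_gcat M) (bul_gcat N) (lfo (mf F))
    (fun a X Y f => lcomp (lfm (mf F) f) (ms F a X)).

Definition bul_nat (M N : mcat) (E F : mfun M N) (t : mnat E F)
  : gnat (bul_fun E) (bul_fun F) :=
  fun X => lcomp (t X) (mepsinv N (lfo (mf E) X)).

Definition nu_comp (M : mcat) : mfun (one_obj (bul_obj M)) M :=
  @MFun (one_obj (bul_obj M)) M
    (@LFun (one_lcat (bul_obj M)) (mc M) id
       (fun X Y (f : lhom (mc M) (lfo (mact M 1%g) X) Y) => lcomp f (meps M X)))
    (fun h X => lid (lfo (mact M h) X)).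

Definition eta_comp (C : gscat) : gfun (bul_obj (one_obj C)) C :=
  @GFun (bul_gcat (one_obj C)) C id
    (fun h X Y (f : ghom C 1%g (shobj (gss C) h X) Y) =>
       gcast (mul1g h) (gcomp f (shr (gss C) h X))).

Definition one_is_2functor : Prop :=
  ((forall C : gscat, is_gscat C -> is_mcat (one_obj C)) /\
      (forall (C D : gscat) (F : gfun C D), is_gscat C -> is_gscat D ->
         is_gfun F -> is_mfun (one_fun F)) /\
      (forall (C D : gscat) (F G : gfun C D) (t : gnat F G),
         is_gscat C -> is_gscat D -> is_gfun F -> is_gfun G -> is_gnat t ->
         is_mnat (one_nat t)) /\
      (forall C : gscat, is_gscat C -> one_fun (gfid C) = mfid (one_obj C)) /\
      (forall (C D E : gscat) (F : gfun C D) (G : gfun D E),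
         is_gscat C -> is_gscat D -> is_gscat E -> is_gfun F -> is_gfun G ->
         one_fun (gfcomp G F) = mfcomp (one_fun G) (one_fun F)) /\
      (forall (C D : gscat) (F : gfun C D),
         is_gscat C -> is_gscat D -> is_gfun F ->
         one_nat (gnid F) = mnid (one_fun F)) /\
      (forall (C D : gscat) (F G K : gfun C D) (t : gnat F G) (u : gnat G K),
         is_gscat C -> is_gscat D -> is_gfun F -> is_gfun G -> is_gfun K ->
         is_gnat t -> is_gnat u ->
         one_nat (gnvcomp u t) = mnvcomp (one_nat u) (one_nat t)) /\
      (forall (C D E : gscat) (F F' : gfun C D) (G G' : gfun D E)
              (t : gnat F F') (u : gnat G G'),
         is_gscat C -> is_gscat D -> is_gscat E ->
         is_gfun F -> is_gfun F' -> is_gfun G -> is_gfun G' ->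
         is_gnat t -> is_gnat u ->
         one_nat (gnhcomp u t) = mnhcomp (one_nat u) (one_nat t))).

Definition bul_is_2functor : Prop :=
  ((forall M : mcat, is_mcat M -> is_gscat (bul_obj M)) /\
      (forall (M N : mcat) (F : mfun M N), is_mcat M -> is_mcat N ->
         is_mfun F -> is_gfun (bul_fun F)) /\
      (forall (M N : mcat) (E F : mfun M N) (t : mnat E F),
         is_mcat M -> is_mcat N -> is_mfun E -> is_mfun F -> is_mnat t ->
         is_gnat (bul_nat t)) /\
      (forall M : mcat, is_mcat M -> bul_fun (mfid M) = gfid (bul_obj M)) /\
      (forall (M N P : mcat) (F : mfun M N) (G : mfun N P),
         is_mcat M -> is_mcat N -> is_mcat P -> is_mfun F -> is_mfun G ->
         bul_fun (mfcomp G F) = gfcomp (bul_fun G) (bul_fun F)) /\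
      (forall (M N : mcat) (F : mfun M N),
         is_mcat M -> is_mcat N -> is_mfun F ->
         bul_nat (mnid F) = gnid (bul_fun F)) /\
      (forall (M N : mcat) (E F G : mfun M N) (t : mnat E F) (u : mnat F G),
         is_mcat M -> is_mcat N -> is_mfun E -> is_mfun F -> is_mfun G ->
         is_mnat t -> is_mnat u ->
         bul_nat (mnvcomp u t) = gnvcomp (bul_nat u) (bul_nat t)) /\
      (forall (M N P : mcat) (F F' : mfun M N) (G G' : mfun N P)
              (t : mnat F F') (u : mnat G G'),
         is_mcat M -> is_mcat N -> is_mcat P ->
         is_mfun F -> is_mfun F' -> is_mfun G -> is_mfun G' ->
         is_mnat t -> is_mnat u ->
         bul_nat (mnhcomp u t) = gnhcomp (bul_nat u) (bul_nat t))).

Definition nu_is_2natiso : Prop :=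
  [/\ (forall M : mcat, is_mcat M -> is_mfun (nu_comp M)),
      (forall M : mcat, is_mcat M ->
         exists G : mfun M (one_obj (bul_obj M)),
           [/\ is_mfun G, mfcomp (nu_comp M) G = mfid M &
               mfcomp G (nu_comp M) = mfid (one_obj (bul_obj M))]),
      (forall (M N : mcat) (F : mfun M N),
         is_mcat M -> is_mcat N -> is_mfun F ->
         mfcomp (nu_comp N) (one_fun (bul_fun F)) = mfcomp F (nu_comp M)) &
      (forall (M N : mcat) (E F : mfun M N) (t : mnat E F),
         is_mcat M -> is_mcat N -> is_mfun E -> is_mfun F -> is_mnat t ->
         mnhcomp (mnid (nu_comp N)) (one_nat (bul_nat t))
         = mnhcomp t (mnid (nu_comp M)))].

Definition eta_is_2natiso : Prop :=
  [/\ (forall C : gscat, is_gscat C -> is_gfun (eta_comp C)),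
      (forall C : gscat, is_gscat C ->
         exists G : gfun C (bul_obj (one_obj C)),
           [/\ is_gfun G, gfcomp (eta_comp C) G = gfid C &
               gfcomp G (eta_comp C) = gfid (bul_obj (one_obj C))]),
      (forall (C D : gscat) (F : gfun C D),
         is_gscat C -> is_gscat D -> is_gfun F ->
         gfcomp (eta_comp D) (bul_fun (one_fun F)) = gfcomp F (eta_comp C)) &
      (forall (C D : gscat) (F G : gfun C D) (t : gnat F G),
         is_gscat C -> is_gscat D -> is_gfun F -> is_gfun G -> is_gnat t ->
         gnhcomp (gnid (eta_comp D)) (bul_nat (one_nat t))
         = gnhcomp t (gnid (eta_comp C)))].

End Defs.

From Pilot Require Import Defs.
From HB Require Import structures.
From mathcomp Require Import all_boot all_algebra monoid.
From Stdlib Require Import ClassicalEpsilon ProofIrrelevance Eqdep.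
From Stdlib Require Import FunctionalExtensionality.
(* [monoid] also exports a [one_fun]; re-importing [Defs] restores the 2-functor. *)
Import Defs.

Set Implicit Arguments.
Unset Strict Implicit.
Unset Printing Implicit Defensive.

Import GRing.Theory.
Local Open Scope ring_scope.

(* Both 2-functors are given by explicit formulas, so every claim is an equation
   between composites of structure maps.  On the graded side each one follows by
   cancelling the shift isomorphisms [r_{X,a}] against their inverses.  On the
   module side three consequences of the coherence axioms suffice: the unit laws
   identify [mu_{1,h}] with [eps^-1] and [mu^-1_{h,1}] with [alpha^h eps];
   inverting the associativity square gives associativity of [mu^-1], which is
   associativity of the composition of [C^bullet]; and [mu_{a^-1,a}] provides the
   inverse of the degree-[a] shift [id : X -> alpha^a X] of [C^bullet].

   These equations hold between homogeneous morphisms whose degrees agree only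
   propositionally.  To rewrite with them freely, every morphism is packed with
   its source, target (and degree) into one type; composition of packed morphisms
   is total (returning the right argument on non-composable pairs), degree casts
   become invisible, and associativity holds up to endpoint side conditions. *)

Section Equivalence.
Variable R : comNzRingType.

(** * Packed morphisms *)

Section PackedLinear.
Variable C : lcat R.

Definition lmor := {p : lobj C * lobj C & lhom (l:=C) p.1 p.2}.
Definition lpack (X Y : lobj C) (f : lhom (l:=C) X Y) : lmor :=
  existT (fun p : lobj C * lobj C => lhom (l:=C) p.1 p.2) (X, Y) f.
Definition lsrc (m : lmor) := (projT1 m).1.
Definition ltgt (m : lmor) := (projT1 m).2.
Definition lmcomp (g f : lmor) : lmor :=
  match excluded_middle_informative (ltgt f = lsrc g) with
  | left e => lpack (lcomp (projT2 g)
                (eq_rect _ (fun Y => lhom (l:=C) (lsrc f) Y) (projT2 f) _ e))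
  | right _ => f
  end.

Lemma lpack_comp X Y Z (g : lhom (l:=C) Y Z) (f : lhom (l:=C) X Y) :
  lpack (lcomp g f) = lmcomp (lpack g) (lpack f).
Proof.
rewrite /lmcomp; case: excluded_middle_informative => [e|]; last by case.
by rewrite (proof_irrelevance _ e erefl).
Qed.

Lemma lpack_inj X Y (f g : lhom (l:=C) X Y) : lpack f = lpack g -> f = g.
Proof. exact: inj_pair2. Qed.

Lemma lsrc_pack X Y (f : lhom (l:=C) X Y) : lsrc (lpack f) = X.
Proof. by []. Qed.

Lemma ltgt_pack X Y (f : lhom (l:=C) X Y) : ltgt (lpack f) = Y.
Proof. by []. Qed.

Lemma lsrc_mcomp (g f : lmor) : lsrc (lmcomp g f) = lsrc f.
Proof. by rewrite /lmcomp; case: excluded_middle_informative. Qed.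

Lemma ltgt_mcomp (g f : lmor) : ltgt f = lsrc g -> ltgt (lmcomp g f) = ltgt g.
Proof. by rewrite /lmcomp; case: excluded_middle_informative. Qed.

Hypothesis HC : is_lcat C.

Lemma lmcompA (f g h : lmor) : ltgt f = lsrc g -> ltgt g = lsrc h ->
  lmcomp h (lmcomp g f) = lmcomp (lmcomp h g) f.
Proof.
case: f => [[X Y] f]; case: g => [[Y' Z] g]; case: h => [[Z' W] h].
rewrite /ltgt /lsrc /= => eY eZ; subst.
by rewrite -!lpack_comp; case: HC => _ _ -> _ _.
Qed.

Lemma lmcomp_idl Y (f : lmor) : ltgt f = Y -> lmcomp (lpack (lid Y)) f = f.
Proof.
move=> <-; case: f => [[X Y'] f].
by rewrite /ltgt /= -lpack_comp; case: HC => _ _ _ -> _.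
Qed.

Lemma lmcomp_idr X (f : lmor) : lsrc f = X -> lmcomp f (lpack (lid X)) = f.
Proof.
move=> <-; case: f => [[X' Y] f].
by rewrite /lsrc /= -lpack_comp; case: HC => _ _ _ _ ->.
Qed.

Lemma lmcompA_fold (x y z rest : lmor) : lmcomp x y = z ->
  ltgt rest = lsrc y -> ltgt y = lsrc x -> lmcomp x (lmcomp y rest) = lmcomp z rest.
Proof. by move=> <- *; rewrite lmcompA. Qed.

Lemma linv_unique (u ui v vi : lmor) :
  lmcomp ui u = lpack (lid (lsrc u)) -> lmcomp v vi = lpack (lid (ltgt v)) -> u = v ->
  ltgt u = lsrc ui -> ltgt vi = lsrc v -> lsrc ui = ltgt v -> ltgt vi = lsrc u ->
  ui = vi.
Proof.
move=> uiK viK e; subst v => u_ui vi_u _ _.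
transitivity (lmcomp ui (lmcomp u vi)); first by rewrite viK lmcomp_idr.
by rewrite (lmcompA vi_u u_ui) uiK lmcomp_idl.
Qed.

End PackedLinear.

Section PackedLinearFunctor.
Variables (C D : lcat R) (F : lfun C D).

Definition lfmor (m : lmor C) : lmor D := lpack (lfm F (projT2 m)).

Lemma lsrc_fmor (m : lmor C) : lsrc (lfmor m) = lfo F (lsrc m).
Proof. by []. Qed.

Lemma ltgt_fmor (m : lmor C) : ltgt (lfmor m) = lfo F (ltgt m).
Proof. by []. Qed.

Lemma lpack_fm X Y (f : lhom (l:=C) X Y) : lpack (lfm F f) = lfmor (lpack f).
Proof. by []. Qed.

Hypothesis HF : is_lfun F.

Lemma lfmor_comp (g f : lmor C) :
  ltgt f = lsrc g -> lfmor (lmcomp g f) = lmcomp (lfmor g) (lfmor f).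
Proof.
case: f => [[X Y] f]; case: g => [[Y' Z] g]; rewrite /ltgt /lsrc /= => eY; subst.
by rewrite -lpack_comp /lfmor /= -lpack_comp; case: HF => _ ->.
Qed.

Lemma lfmor_compE (x y z : lmor C) : lmcomp x y = z -> ltgt y = lsrc x ->
  lmcomp (lfmor x) (lfmor y) = lfmor z.
Proof. by move=> <- e; rewrite lfmor_comp. Qed.

Lemma lfmor_id X : lfmor (lpack (lid X)) = lpack (lid (lfo F X)).
Proof. by rewrite /lfmor /=; case: HF => _ _ ->. Qed.

End PackedLinearFunctor.

Variable H : groupType.

Section PackedGraded.
Variable C : gcat R H.

Definition gmor := {p : gobj C * gobj C * H & ghom (g:=C) p.2 p.1.1 p.1.2}.
Definition gpack (X Y : gobj C) (h : H) (f : ghom (g:=C) h X Y) : gmor :=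
  existT (fun p : gobj C * gobj C * H => ghom (g:=C) p.2 p.1.1 p.1.2) (X, Y, h) f.
Definition gsrc (m : gmor) := (projT1 m).1.1.
Definition gtgt (m : gmor) := (projT1 m).1.2.
Definition gmcomp (g f : gmor) : gmor :=
  match excluded_middle_informative (gtgt f = gsrc g) with
  | left e => gpack (gcomp (projT2 g)
                (eq_rect _ (fun Y => ghom (g:=C) (projT1 f).2 (gsrc f) Y) (projT2 f) _ e))
  | right _ => f
  end.

Lemma gpack_comp a b X Y Z (g : ghom (g:=C) a Y Z) (f : ghom (g:=C) b X Y) :
  gpack (gcomp g f) = gmcomp (gpack g) (gpack f).
Proof.
rewrite /gmcomp; case: excluded_middle_informative => [e|]; last by case.
by rewrite (proof_irrelevance _ e erefl).
Qed.

Lemma gpack_inj a X Y (f g : ghom (g:=C) a X Y) : gpack f = gpack g -> f = g.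
Proof. exact: inj_pair2. Qed.

Lemma gpack_cast a b X Y (e : a = b) (f : ghom (g:=C) a X Y) : gpack (gcast e f) = gpack f.
Proof. by case: b / e. Qed.

Lemma gsrc_mcomp (g f : gmor) : gsrc (gmcomp g f) = gsrc f.
Proof. by rewrite /gmcomp; case: excluded_middle_informative. Qed.

Lemma gtgt_mcomp (g f : gmor) : gtgt f = gsrc g -> gtgt (gmcomp g f) = gtgt g.
Proof. by rewrite /gmcomp; case: excluded_middle_informative. Qed.

Lemma gcast_linear a b X Y (e : a = b) (k : R) (f g : ghom (g:=C) a X Y) :
  gcast e (k *: f + g) = k *: gcast e f + gcast e g.
Proof. by case: b / e. Qed.

Hypothesis HC : is_gcat C.

Lemma gmcompA (f g h : gmor) : gtgt f = gsrc g -> gtgt g = gsrc h ->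
  gmcomp h (gmcomp g f) = gmcomp (gmcomp h g) f.
Proof.
case: f => [[[X Y] a] f]; case: g => [[[Y' Z] b] g]; case: h => [[[Z' W] c] h].
rewrite /gtgt /gsrc /= => eY eZ; subst.
by rewrite -!gpack_comp; case: HC => _ _ -> _ _; rewrite gpack_cast.
Qed.

Lemma gmcomp_idl Y (f : gmor) : gtgt f = Y -> gmcomp (gpack (gid Y)) f = f.
Proof.
move=> <-; case: f => [[[X Y'] a] f].
rewrite /gtgt /= -gpack_comp.
case: HC => _ _ _ U _; rewrite -[in RHS](U _ _ _ f).
exact: esym (gpack_cast _ _).
Qed.

Lemma gmcomp_idr X (f : gmor) : gsrc f = X -> gmcomp f (gpack (gid X)) = f.
Proof.
move=> <-; case: f => [[[X' Y] a] f].
rewrite /gsrc /= -gpack_comp.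
case: HC => _ _ _ _ U; rewrite -[in RHS](U _ _ _ f).
exact: esym (gpack_cast _ _).
Qed.

Lemma gmcomp_cancel (x y rest : gmor) Z : gmcomp x y = gpack (gid Z) ->
  gtgt rest = gsrc y -> gtgt y = gsrc x -> gtgt rest = Z -> gmcomp x (gmcomp y rest) = rest.
Proof. by move=> xyK *; rewrite gmcompA // xyK gmcomp_idl. Qed.

End PackedGraded.

Section PackedGradedFunctor.
Variables (C D : gcat R H) (F : gfun C D).

Definition gfmor (m : gmor C) : gmor D := gpack (gfm F (projT2 m)).

Lemma gpack_fm a X Y (f : ghom (g:=C) a X Y) : gpack (gfm F f) = gfmor (gpack f).
Proof. by []. Qed.

Hypothesis HF : is_gfun F.

Lemma gfmor_comp (g f : gmor C) :
  gtgt f = gsrc g -> gfmor (gmcomp g f) = gmcomp (gfmor g) (gfmor f).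
Proof.
case: f => [[[X Y] a] f]; case: g => [[[Y' Z] b] g]; rewrite /gtgt /gsrc /= => eY; subst.
by rewrite -gpack_comp /gfmor /= -gpack_comp; case: HF => _ ->.
Qed.

Lemma gfmor_id X : gfmor (gpack (gid X)) = gpack (gid (gfo F X)).
Proof. by rewrite /gfmor /=; case: HF => _ _ ->. Qed.

End PackedGradedFunctor.

(* [gside] discharges the endpoint side conditions [gtgt f = gsrc g] of the
   rewrite rules for packed morphisms. *)
Ltac gside := rewrite ?gsrc_mcomp; first [ done | rewrite gtgt_mcomp; [gside | gside] ].
Ltac gunpack := rewrite ?(gpack_cast, gpack_comp, gpack_fm).
Ltac greassoc HC := gunpack; repeat (rewrite -(gmcompA HC); [|gside|gside]).

(** * Shifted graded categories and the 2-functor [(-)^1] *)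

Section ShiftCancellation.
Variable C : gscat R H.
Hypothesis HC : is_gscat C.
Let HG : is_gcat C := proj1 HC.
Notation r := (shr (gss C)).
Notation ri := (shrinv (gss C)).

Lemma shr_shrinv a X :
  gmcomp (gpack (r a X)) (gpack (ri a X)) = gpack (gid (shobj (gss C) a X)).
Proof. by case: HC => _ /(_ a X) [<- _]; rewrite gpack_cast gpack_comp. Qed.

Lemma shrinv_shr a X : gmcomp (gpack (ri a X)) (gpack (r a X)) = gpack (gid X).
Proof. by case: HC => _ /(_ a X) [_ <-]; rewrite gpack_cast gpack_comp. Qed.

Lemma shr_shrinvK a X (rest : gmor C) : gtgt rest = shobj (gss C) a X ->
  gmcomp (gpack (r a X)) (gmcomp (gpack (ri a X)) rest) = rest.
Proof. by move=> e; apply: (gmcomp_cancel HG (shr_shrinv a X)). Qed.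

Lemma shrinv_shrK a X (rest : gmor C) : gtgt rest = X ->
  gmcomp (gpack (ri a X)) (gmcomp (gpack (r a X)) rest) = rest.
Proof. by move=> e; apply: (gmcomp_cancel HG (shrinv_shr a X)). Qed.

Variables (D : gcat R H) (F : gfun C D).
Hypotheses (HD : is_gcat D) (HF : is_gfun F).

Lemma fmor_shr_shrinv a X :
  gmcomp (gfmor F (gpack (r a X))) (gfmor F (gpack (ri a X))) =
  gpack (gid (gfo F (shobj (gss C) a X))).
Proof. by rewrite -gfmor_comp // shr_shrinv gfmor_id. Qed.

Lemma fmor_shrinv_shr a X :
  gmcomp (gfmor F (gpack (ri a X))) (gfmor F (gpack (r a X))) = gpack (gid (gfo F X)).
Proof. by rewrite -gfmor_comp // shrinv_shr gfmor_id. Qed.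

Lemma fmor_shr_shrinvK a X (rest : gmor D) : gtgt rest = gfo F (shobj (gss C) a X) ->
  gmcomp (gfmor F (gpack (r a X))) (gmcomp (gfmor F (gpack (ri a X))) rest) = rest.
Proof. by move=> e; apply: (gmcomp_cancel HD (fmor_shr_shrinv a X)). Qed.

Lemma fmor_shrinv_shrK a X (rest : gmor D) : gtgt rest = gfo F X ->
  gmcomp (gfmor F (gpack (ri a X))) (gmcomp (gfmor F (gpack (r a X))) rest) = rest.
Proof. by move=> e; apply: (gmcomp_cancel HD (fmor_shrinv_shr a X)). Qed.

End ShiftCancellation.

(* [gsolve] brings both sides to right-associated normal form, with functors pushed
   to the generators, then cancels shifts against their inverses and identities. *)
Ltac gcat_hyp := first [assumption | apply: proj1; assumption].
Ltac gcancel_step := first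
  [ rewrite shr_shrinvK; [|assumption|gside] | rewrite shrinv_shrK; [|assumption|gside]
  | rewrite shr_shrinv; [|assumption] | rewrite shrinv_shr; [|assumption]
  | rewrite fmor_shr_shrinvK; [|assumption|gcat_hyp|assumption|gside]
  | rewrite fmor_shrinv_shrK; [|assumption|gcat_hyp|assumption|gside]
  | rewrite fmor_shr_shrinv; [|assumption|assumption]
  | rewrite fmor_shrinv_shr; [|assumption|assumption]
  | rewrite gmcomp_idl; [|gcat_hyp|gside] | rewrite gmcomp_idr; [|gcat_hyp|gside] ].
Ltac gdistr :=
  repeat (rewrite gfmor_comp; [|assumption|gside]); repeat (rewrite gfmor_id; [|assumption]).
Ltac gsolve := gunpack; gdistr; repeat (rewrite -gmcompA; [|gcat_hyp|gside|gside]);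
  repeat gcancel_step; try done.

Section OneObject.
Variable C : gscat R H.
Hypothesis HC : is_gscat C.
Let HG : is_gcat C := proj1 HC.
Notation r := (shr (gss C)).
Notation ri := (shrinv (gss C)).

Lemma one_lcat_lcat : is_lcat (one_lcat C).
Proof.
case: HG => linl linr _ _ _; split => /=.
- by move=> X Y Z k g g' f; rewrite linl gcast_linear.
- by move=> X Y Z k g f f'; rewrite linr gcast_linear.
- by move=> W X Y Z h g f; apply: gpack_inj; greassoc HG.
- by move=> X Y f; apply: gpack_inj; greassoc HG; rewrite gmcomp_idl.
- by move=> X Y f; apply: gpack_inj; greassoc HG; rewrite gmcomp_idr.
Qed.

Lemma one_act_lfun a : is_lfun (one_act C a).
Proof.
case: HG => linl linr _ _ _; split => /=.
- by move=> X Y k f f'; rewrite linr linl gcast_linear.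
- by move=> X Y Z g f; apply: gpack_inj; gsolve.
- by move=> X; apply: gpack_inj; gsolve.
Qed.

Lemma gpack_one_mtr (Z X : gobj C) k k' (e : k = k')
    (f : ghom (g:=C) 1%g Z (shobj (gss C) k X)) :
  gpack (mtr (M:=one_obj C) e f) = gpack f.
Proof. by case: k' / e. Qed.

Lemma one_act_autoequiv a : is_autoequiv (one_act C a).
Proof.
exists (one_act C (a^-1)%g); split; first exact: one_act_lfun.
split.
- exists (fun X => gcast (mulVg a) (gcomp (r (a^-1)%g (shobj (gss C) a X)) (r a X))).
  split; first by move=> X Y f /=; apply: gpack_inj; gsolve.
  move=> X.
  exists (gcast (mulgV (a^-1)%g) (gcomp (ri a X) (ri (a^-1)%g (shobj (gss C) a X)))).
  by split; apply: gpack_inj; gsolve.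
- exists (fun X => gcast (mulgV a) (gcomp (r a (shobj (gss C) (a^-1)%g X)) (r (a^-1)%g X))).
  split; first by move=> X Y f /=; apply: gpack_inj; gsolve.
  move=> X.
  exists (gcast (mulVg (a^-1)%g) (gcomp (ri (a^-1)%g X) (ri a (shobj (gss C) (a^-1)%g X)))).
  by split; apply: gpack_inj; gsolve.
Qed.

Lemma one_obj_mcat : is_mcat (one_obj C).
Proof.
split; first exact: one_lcat_lcat.
split; first by move=> h; split; [exact: one_act_lfun | exact: one_act_autoequiv].
split; first by move=> X Y f /=; apply: gpack_inj; gsolve.
split; first by move=> X Y f /=; apply: gpack_inj; gsolve.
split; first by move=> a b; split=> X Y f /=; apply: gpack_inj; gsolve.
split; first by move=> X; split; apply: gpack_inj; gsolve.
split; first by move=> a b X; split; apply: gpack_inj; gsolve.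
split.
  move=> h X; split; apply: gpack_inj; rewrite gpack_one_mtr; gsolve.
  - by rewrite mul1g; gsolve.
  - by rewrite mulg1; gsolve.
move=> a b c X; apply: gpack_inj; rewrite gpack_one_mtr; gsolve.
by rewrite mulgA; gsolve.
Qed.

End OneObject.

Lemma mfun_ext (M N : mcat R H) (o : lobj (mc M) -> lobj (mc N))
    (m1 m2 : forall X Y, lhom (l:=mc M) X Y -> lhom (l:=mc N) (o X) (o Y)) s1 s2 :
  m1 = m2 -> (forall h X, s1 h X = s2 h X) ->
  @MFun _ _ M N (LFun m1) s1 = @MFun _ _ M N (LFun m2) s2.
Proof.
move=> <- es; congr MFun.
by apply: functional_extensionality_dep => h; apply: functional_extensionality_dep.
Qed.

Lemma gfun_ext (C D : gcat R H) (o : gobj C -> gobj D)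
    (m1 m2 : forall a X Y, ghom (g:=C) a X Y -> ghom (g:=D) a (o X) (o Y)) :
  (forall a X Y f, m1 a X Y f = m2 a X Y f) -> GFun m1 = GFun m2.
Proof.
move=> em; congr GFun.
apply: functional_extensionality_dep => a; apply: functional_extensionality_dep => X.
by apply: functional_extensionality_dep => Y; apply: functional_extensionality_dep.
Qed.

Section OneMorphisms.
Variables (C D E : gscat R H).
Hypotheses (HC : is_gscat C) (HD : is_gscat D) (HE : is_gscat E).
Let HCg : is_gcat C := proj1 HC.
Let HDg : is_gcat D := proj1 HD.
Let HEg : is_gcat E := proj1 HE.

Lemma gnat_mcomp_nat (F G : gfun C D) (t : gnat F G) : is_gnat t ->
  forall a X Y (f : ghom (g:=C) a X Y) (rest : gmor D), gtgt rest = gfo F X ->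
  gmcomp (gfmor G (gpack f)) (gmcomp (gpack (t X)) rest) =
  gmcomp (gpack (t Y)) (gmcomp (gfmor F (gpack f)) rest).
Proof.
move=> Ht a X Y f rest e; rewrite !gmcompA //; congr gmcomp.
have := congr1 (fun z => gpack z) (Ht a X Y f).
by rewrite !gpack_cast -!gpack_fm -!gpack_comp.
Qed.

Lemma one_fun_mfun (F : gfun C D) : is_gfun F -> is_mfun (one_fun F).
Proof.
move=> HF; split.
- split => /=.
  + by move=> X Y k f f'; case: HF => ->.
  + by move=> X Y Z g f; apply: gpack_inj; gsolve.
  + by move=> X; case: HF => _ _ ->.
- move=> h; split; first by move=> X Y f /=; apply: gpack_inj; gsolve.
  move=> X; exists (gcast (mulgV h)
    (gcomp (shr (gss D) h (gfo F X)) (gfm F (shrinv (gss C) h X)))).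
  by split; apply: gpack_inj; gsolve.
- by move=> X /=; apply: gpack_inj; gsolve.
- by move=> a b X /=; apply: gpack_inj; gsolve.
Qed.

Lemma one_nat_mnat (F G : gfun C D) (t : gnat F G) :
  is_gfun F -> is_gfun G -> is_gnat t -> is_mnat (one_nat t).
Proof.
move=> HF HG Ht; split.
- move=> X Y f /=; apply: gpack_inj.
  by have := congr1 (fun z => gpack z) (Ht 1%g X Y f); rewrite !gpack_cast.
- move=> h X /=; apply: gpack_inj; gsolve.
  by rewrite /one_nat -(gnat_mcomp_nat Ht) //; gsolve.
Qed.

Lemma one_fun_id : one_fun (gfid C) = mfid (one_obj C).
Proof. by apply: mfun_ext => // h X; apply: gpack_inj; gsolve. Qed.

Lemma one_fun_comp (F : gfun C D) (G : gfun D E) : is_gfun F -> is_gfun G ->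
  one_fun (gfcomp G F) = mfcomp (one_fun G) (one_fun F).
Proof. by move=> HF HG; apply: mfun_ext => // h X; apply: gpack_inj; gsolve. Qed.

End OneMorphisms.

(** * Module categories and the 2-functor [(-)^bullet] *)

Ltac group_eq := solve [ rewrite /lsrc /ltgt /lfmor /lpack; cbn [projT1 fst snd];
  do 3 rewrite ?mulgA ?mulg1 ?mul1g ?mulgV ?mulVg ?mulgK ?invg1; first [done | reflexivity] ].
Ltac lside := rewrite ?(lsrc_mcomp, lsrc_fmor, ltgt_fmor);
  first [ done | reflexivity | rewrite ltgt_mcomp; [lside | lside] | group_eq ].

Lemma mcat_lcat (M : mcat R H) : is_mcat M -> is_lcat (mc M).
Proof. by case. Qed.

Lemma mcat_act (M : mcat R H) : is_mcat M -> forall h, is_lfun (mact M h).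
Proof. by case => _ [+ _] h => /(_ h) []. Qed.

Lemma mfun_lfun (M N : mcat R H) (F : mfun M N) : is_mfun F -> is_lfun (mf F).
Proof. by case. Qed.

Lemma lpack_mtr (M : mcat R H) (Z X : lobj (mc M)) k k' (e : k = k')
    (f : lhom (l:=mc M) Z (lfo (mact M k) X)) :
  lpack (mtr e f) = lpack f.
Proof. by case: k' / e. Qed.

Lemma lpack_bul_cast (M : mcat R H) a b (X Y : lobj (mc M)) (e : a = b)
    (f : lhom (l:=mc M) (lfo (mact M a) X) Y) :
  lpack (gcast (C:=bul_gcat M) e f) = lpack f.
Proof. by case: b / e. Qed.

Ltac lfun_hyp := first [ assumption | apply: mcat_act; assumption | apply: mfun_lfun; assumption ].
Ltac lunpack := rewrite ?(lpack_comp, lpack_fm, lpack_mtr, lpack_bul_cast).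
Ltac ldistr :=
  repeat (rewrite lfmor_comp; [|lfun_hyp|lside]); repeat (rewrite lfmor_id; [|lfun_hyp]).
Ltac lreassoc HC := repeat (rewrite -(lmcompA HC); [|lside|lside]).
Ltac lnormalize HC := lunpack; ldistr; lreassoc HC.
Ltac lrw_fold HC E :=
  first [ rewrite (lmcompA_fold HC E); [|lside|lside] | rewrite E ]; lreassoc HC.

Section BulletObject.
Variable M : mcat R H.
Hypothesis HM : is_mcat M.
Let HLM : is_lcat (mc M) := mcat_lcat HM.
Notation A k m := (lfmor (mact M k) m).
Notation e_ := (@meps _ _ M).
Notation ei := (@mepsinv _ _ M).
Notation mu := (@mmu _ _ M).
Notation mi := (@mmuinv _ _ M).
Notation al k X := (lfo (mact M k) X).

Lemma mepsinvK X : lmcomp (lpack (ei X)) (lpack (e_ X)) = lpack (lid X).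
Proof. by case: HM => _ [_ [_ [_ [_ [/(_ X) [<- _] _]]]]]; rewrite -lpack_comp. Qed.

Lemma mepsK X : lmcomp (lpack (e_ X)) (lpack (ei X)) = lpack (lid (al 1%g X)).
Proof. by case: HM => _ [_ [_ [_ [_ [/(_ X) [_ <-] _]]]]]; rewrite -lpack_comp. Qed.

Lemma mmuinvK a b X :
  lmcomp (lpack (mi a b X)) (lpack (mu a b X)) = lpack (lid (al a (al b X))).
Proof. by case: HM => _ [_ [_ [_ [_ [_ [/(_ a b X) [<- _] _]]]]]]; rewrite -lpack_comp. Qed.

Lemma mmuK a b X : lmcomp (lpack (mu a b X)) (lpack (mi a b X)) = lpack (lid (al (a * b)%g X)).
Proof. by case: HM => _ [_ [_ [_ [_ [_ [/(_ a b X) [_ <-] _]]]]]]; rewrite -lpack_comp. Qed.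

Lemma meps_nat X Y (f : lhom (l:=mc M) X Y) :
  lmcomp (A 1%g (lpack f)) (lpack (e_ X)) = lmcomp (lpack (e_ Y)) (lpack f).
Proof. by case: HM => _ [_ [nat_eps _]]; rewrite /lfmor /= -!lpack_comp nat_eps. Qed.

Lemma mepsinv_nat X Y (f : lhom (l:=mc M) X Y) :
  lmcomp (lpack (ei Y)) (A 1%g (lpack f)) = lmcomp (lpack f) (lpack (ei X)).
Proof. by case: HM => _ [_ [_ [nat_epsinv _]]]; rewrite /lfmor /= -!lpack_comp nat_epsinv. Qed.

Lemma mmuinv_nat a b X Y (f : lhom (l:=mc M) X Y) :
  lmcomp (lpack (mi a b Y)) (A (a * b)%g (lpack f)) =
  lmcomp (A a (A b (lpack f))) (lpack (mi a b X)).
Proof.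
by case: HM => _ [_ [_ [_ [/(_ a b) [_ nat_muinv] _]]]]; rewrite /lfmor /= -!lpack_comp nat_muinv.
Qed.

Lemma mmu1l_meps h X :
  lmcomp (lpack (mu 1%g h X)) (lpack (e_ (al h X))) = lpack (lid (al h X)).
Proof.
case: HM => _ [_ [_ [_ [_ [_ [_ [/(_ h X) [unitl _] _]]]]]]].
by rewrite -lpack_comp unitl lpack_mtr.
Qed.

Lemma mmu1r_meps h X :
  lmcomp (lpack (mu h 1%g X)) (A h (lpack (e_ X))) = lpack (lid (al h X)).
Proof.
case: HM => _ [_ [_ [_ [_ [_ [_ [/(_ h X) [_ unitr] _]]]]]]].
by rewrite /lfmor /= -lpack_comp unitr lpack_mtr.
Qed.

Lemma mmuA a b c X :
  lmcomp (lpack (mu (a * b)%g c X)) (lpack (mu a b (al c X))) =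
  lmcomp (lpack (mu a (b * c)%g X)) (A a (lpack (mu b c X))).
Proof.
case: HM => _ [_ [_ [_ [_ [_ [_ [_ assoc]]]]]]].
by rewrite /lfmor /= -!lpack_comp assoc lpack_mtr.
Qed.

(* The unit coherences determine [mu_{1,h}], [mu^-1_{1,h}] and [mu^-1_{h,1}]
   because inverses are unique; [k = 1] is a hypothesis so that they also apply
   at degrees that are only propositionally equal to [1]. *)
Lemma mmu1lE k h X : k = 1%g -> lpack (mu k h X) = lpack (ei (al h X)).
Proof.
move=> ->.
have -> : lpack (mu 1%g h X) =
    lmcomp (lpack (mu 1%g h X)) (lmcomp (lpack (e_ (al h X))) (lpack (ei (al h X)))).
  by rewrite mepsK lmcomp_idr.
by rewrite lmcompA // mmu1l_meps lmcomp_idl.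
Qed.

Lemma mmuinv1lE k h X : k = 1%g -> lpack (mi k h X) = lpack (e_ (al h X)).
Proof.
move=> ->.
have -> : lpack (mi 1%g h X) =
    lmcomp (lpack (mi 1%g h X)) (lmcomp (lpack (mu 1%g h X)) (lpack (e_ (al h X)))).
  by rewrite mmu1l_meps lmcomp_idr //; group_eq.
by rewrite lmcompA // mmuinvK lmcomp_idl.
Qed.

Lemma mmuinv1rE h k X : k = 1%g -> lpack (mi h k X) = A h (lpack (e_ X)).
Proof.
move=> ->.
have -> : lpack (mi h 1%g X) =
    lmcomp (lpack (mi h 1%g X)) (lmcomp (lpack (mu h 1%g X)) (A h (lpack (e_ X)))).
  by rewrite mmu1r_meps lmcomp_idr //; group_eq.
by rewrite lmcompA // mmuinvK lmcomp_idl.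
Qed.

Lemma mmu_mmuinvA a b c X :
  lmcomp (A a (lpack (mu b c X))) (lpack (mi a b (al c X))) =
  lmcomp (lpack (mi a (b * c)%g X)) (lpack (mu (a * b)%g c X)).
Proof.
transitivity (lmcomp (lpack (mi a (b * c)%g X)) (lmcomp (lpack (mu a (b * c)%g X))
   (lmcomp (A a (lpack (mu b c X))) (lpack (mi a b (al c X)))))).
  rewrite (lmcompA HLM); [|lside|lside].
  by rewrite (mmuinvK a (b * c)%g X) lmcomp_idl //; lside.
lrw_fold HLM (esym (mmuA a b c X)); lreassoc HLM.
by rewrite mmuK lmcomp_idr.
Qed.

(* Associativity of [mu^-1], i.e. of the composition of [C^bullet]: both sides
   are inverse to the two sides of the associativity square [mmuA]. *)
Lemma mmuinvA a b c X :
  lmcomp (A a (lpack (mi b c X))) (lpack (mi a (b * c)%g X)) =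
  lmcomp (lpack (mi a b (al c X))) (lpack (mi (a * b)%g c X)).
Proof.
symmetry.
apply: (linv_unique HLM
  (u := lmcomp (lpack (mu (a * b)%g c X)) (lpack (mu a b (al c X))))
  (v := lmcomp (lpack (mu a (b * c)%g X)) (A a (lpack (mu b c X))))); try lside.
- lreassoc HLM; lrw_fold HLM (mmuinvK (a * b)%g c X).
  by rewrite (lmcomp_idl HLM) // mmuinvK lsrc_mcomp.
- lreassoc HLM; lrw_fold HLM (lfmor_compE (mcat_act HM a) (mmuK b c X) erefl).
  by rewrite (lfmor_id (mcat_act HM a)) (lmcomp_idl HLM) // mmuK ltgt_mcomp.
- exact: mmuA.
Qed.

(* The shift [r_{X,a} = id] of [C^bullet] composed with its inverse
   [eps^-1 o mu_{a^-1,a}], written out in [C]. *)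
Lemma bul_shr_shrinv a X :
  lmcomp (A a (lpack (ei X)))
    (lmcomp (A a (lpack (mu (a^-1)%g a X))) (lpack (mi a (a^-1)%g (al a X))))
  = lpack (ei (al a X)).
Proof.
rewrite (mmu_mmuinvA a (a^-1)%g a X) (mmuinv1rE _ _ (mulVg a)) (mmu1lE _ _ (mulgV a)).
lrw_fold HLM (lfmor_compE (mcat_act HM a) (mepsinvK X) erefl).
by rewrite (lfmor_id (mcat_act HM a)) (lmcomp_idl HLM).
Qed.

Lemma bul_shr_shrinvK a X (rest : lmor (mc M)) :
  ltgt rest = lsrc (lpack (mi a (a^-1)%g (al a X))) ->
  lmcomp (A a (lpack (ei X))) (lmcomp (A a (lpack (mu (a^-1)%g a X)))
    (lmcomp (lpack (mi a (a^-1)%g (al a X))) rest))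
  = lmcomp (lpack (ei (al a X))) rest.
Proof. by move=> e; rewrite -bul_shr_shrinv; lreassoc HLM. Qed.

Lemma mmuinv_bul_shrinvK h X (rest : lmor (mc M)) :
  ltgt rest = lsrc (lpack (mi (h * 1)%g (h^-1)%g (al h X))) ->
  lmcomp (lpack (mi h 1%g X)) (lmcomp (A (h * 1)%g (lpack (ei X)))
    (lmcomp (A (h * 1)%g (lpack (mu (h^-1)%g h X)))
      (lmcomp (lpack (mi (h * 1)%g (h^-1)%g (al h X))) rest))) =
  lmcomp (A h (lpack (e_ X))) (lmcomp (lpack (ei (al h X))) rest).
Proof.
rewrite (mmuinv1rE h X (erefl 1%g)) (mulg1 h) => e.
lrw_fold HLM (lfmor_compE (mcat_act HM h) (mepsK X) erefl).
rewrite (lfmor_id (mcat_act HM h)) (lmcomp_idl HLM); [|lside].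
lrw_fold HLM (mmu_mmuinvA h (h^-1)%g h X).
by rewrite (mmuinv1rE _ _ (mulVg h)) (mmu1lE _ _ (mulgV h)).
Qed.

Lemma mepsinvK_eq X X' : X = X' -> lmcomp (lpack (ei X)) (lpack (e_ X')) = lpack (lid X').
Proof. by move=> ->; apply: mepsinvK. Qed.

Lemma mepsinv_natK Y (m rest : lmor (mc M)) : ltgt m = Y -> ltgt rest = al 1%g (lsrc m) ->
  lmcomp (lpack (ei Y)) (lmcomp (A 1%g m) rest) = lmcomp m (lmcomp (lpack (ei (lsrc m))) rest).
Proof.
move=> <- e; rewrite (lmcompA HLM) ?lsrc_fmor //.
by case: m e => [[X' Y'] f] /= e; rewrite mepsinv_nat -(lmcompA HLM).
Qed.

Lemma bul_gcat_gcat : is_gcat (bul_gcat M).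
Proof.
case: (mcat_lcat HM) => linl linr _ _ _; split => /=.
- by move=> a b X Y Z k g g' f; rewrite linl.
- by move=> a b X Y Z k g f f'; case: (mcat_act HM a) => -> _ _; rewrite linl linr.
- move=> a b c W X Y Z h g f; apply: lpack_inj; lnormalize HLM.
  by lrw_fold HLM (mmuinv_nat a b f); rewrite -(mmuinvA a b c W).
- move=> a X Y f; apply: lpack_inj; lnormalize HLM.
  rewrite (mmuinv1lE a X (erefl 1%g)); lrw_fold HLM (mepsinv_nat f).
  by rewrite mepsinvK lmcomp_idr.
- move=> a X Y f; apply: lpack_inj; lnormalize HLM.
  rewrite (mmuinv1rE a X (erefl 1%g)).
  rewrite (lfmor_compE (mcat_act HM a) (mepsinvK X) erefl) (lfmor_id (mcat_act HM a)).
  by rewrite lmcomp_idr.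
Qed.

Lemma bul_shifts_shifts : is_shifts (bul_shifts M).
Proof.
move=> a X; split; apply: lpack_inj => /=; lnormalize HLM.
- by rewrite (lmcomp_idl HLM); [exact: bul_shr_shrinv | lside].
- by rewrite (lmcomp_idl HLM); [rewrite mmuK lmcomp_idr //; lside | lside].
Qed.

Lemma bul_obj_gscat : is_gscat (bul_obj M).
Proof. by split; [exact: bul_gcat_gcat | exact: bul_shifts_shifts]. Qed.

End BulletObject.

Section BulletMorphisms.
Variables (M N : mcat R H).
Hypotheses (HM : is_mcat M) (HN : is_mcat N).
Let HLN : is_lcat (mc N) := mcat_lcat HN.
Notation A k m := (lfmor (mact M k) m).
Notation B k m := (lfmor (mact N k) m).

Section BulletFunctor.
Variables (F : mfun M N).
Hypothesis HF : is_mfun F.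
Let HFl : is_lfun (mf F) := mfun_lfun HF.
Notation Fm m := (lfmor (mf F) m).

Lemma ms_nat h X Y (f : lhom (l:=mc M) X Y) :
  lmcomp (Fm (A h (lpack f))) (lpack (ms F h X)) =
  lmcomp (lpack (ms F h Y)) (B h (Fm (lpack f))).
Proof. by case: HF => _ /(_ h) [nat_s _] _ _; rewrite /lfmor /= -!lpack_comp nat_s. Qed.

Lemma ms_unit X :
  lmcomp (lpack (ms F 1%g X)) (lpack (@meps _ _ N (lfo (mf F) X))) =
  Fm (lpack (@meps _ _ M X)).
Proof. by case: HF => _ _ unit_s _; rewrite -lpack_comp unit_s. Qed.

Lemma ms_mul a b X :
  lmcomp (Fm (lpack (@mmu _ _ M a b X)))
    (lmcomp (lpack (ms F a (lfo (mact M b) X))) (B a (lpack (ms F b X)))) =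
  lmcomp (lpack (ms F (a * b)%g X)) (lpack (@mmu _ _ N a b (lfo (mf F) X))).
Proof. by case: HF => _ _ _ mul_s; rewrite /lfmor /= -!lpack_comp mul_s. Qed.

Lemma ms_mulinv a b X :
  lmcomp (Fm (lpack (@mmuinv _ _ M a b X))) (lpack (ms F (a * b)%g X)) =
  lmcomp (lpack (ms F a (lfo (mact M b) X)))
    (lmcomp (B a (lpack (ms F b X))) (lpack (@mmuinv _ _ N a b (lfo (mf F) X)))).
Proof.
transitivity (lmcomp (Fm (lpack (@mmuinv _ _ M a b X))) (lmcomp (lpack (ms F (a * b)%g X))
   (lmcomp (lpack (@mmu _ _ N a b (lfo (mf F) X))) (lpack (@mmuinv _ _ N a b (lfo (mf F) X)))))).
  by rewrite (mmuK HN) lmcomp_idr.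
lrw_fold HLN (esym (ms_mul a b X)).
lrw_fold HLN (lfmor_compE HFl (mmuinvK HM a b X) erefl).
by rewrite (lfmor_id HFl) (lmcomp_idl HLN); [|lside].
Qed.

Lemma ms_unitinv X :
  lmcomp (Fm (lpack (@mepsinv _ _ M X))) (lpack (ms F 1%g X)) =
  lpack (@mepsinv _ _ N (lfo (mf F) X)).
Proof.
transitivity (lmcomp (Fm (lpack (@mepsinv _ _ M X))) (lmcomp (lpack (ms F 1%g X))
   (lmcomp (lpack (@meps _ _ N (lfo (mf F) X))) (lpack (@mepsinv _ _ N (lfo (mf F) X)))))).
  by rewrite (mepsK HN) lmcomp_idr.
lrw_fold HLN (ms_unit X); lrw_fold HLN (lfmor_compE HFl (mepsinvK HM X) erefl).
by rewrite (lfmor_id HFl) (lmcomp_idl HLN); [|lside].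
Qed.

Lemma bul_fun_gfun : is_gfun (bul_fun F).
Proof.
case: (mcat_lcat HN) => linl _ _ _ _; split => /=.
- by move=> a X Y k f f'; case: HFl => -> _ _; rewrite linl.
- move=> a b X Y Z g f; apply: lpack_inj; lnormalize HLN.
  by lrw_fold HLN (esym (ms_nat a f)); rewrite ms_mulinv.
- by move=> X; apply: lpack_inj; lnormalize HLN; apply: ms_unitinv.
Qed.

End BulletFunctor.

Section BulletNat.
Variables (E F : mfun M N) (t : mnat E F).
Hypotheses (HE : is_mfun E) (HF : is_mfun F) (Ht : is_mnat t).
Let HFl : is_lfun (mf F) := mfun_lfun HF.

Lemma mnat_nat X Y (f : lhom (l:=mc M) X Y) :
  lmcomp (lfmor (mf F) (lpack f)) (lpack (t X)) =
  lmcomp (lpack (t Y)) (lfmor (mf E) (lpack f)).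
Proof. by case: Ht => nat_t _; rewrite /lfmor /= -!lpack_comp nat_t. Qed.

Lemma mnat_ms h X :
  lmcomp (lpack (t (lfo (mact M h) X))) (lpack (ms E h X)) =
  lmcomp (lpack (ms F h X)) (B h (lpack (t X))).
Proof. by case: Ht => _ ms_t; rewrite /lfmor /= -!lpack_comp ms_t. Qed.

Lemma bul_nat_gnat : is_gnat (bul_nat t).
Proof.
move=> a X Y f /=; apply: lpack_inj; lnormalize HLN.
rewrite (mmuinv1rE HN a (lfo (mf E) X) (erefl 1%g)).
lrw_fold HLN (lfmor_compE (mcat_act HN a) (mepsinvK HN (lfo (mf E) X)) erefl).
rewrite (lfmor_id (mcat_act HN a)) (lmcomp_idr HLN); [|lside].
rewrite (mmuinv1lE HN a (lfo (mf E) X) (erefl 1%g)).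
lrw_fold HLN (mepsinv_nat HN (lfm (mf E) f)); lrw_fold HLN (mepsinv_nat HN (ms E a X)).
rewrite (mepsinvK HN) (lmcomp_idr HLN); [|lside].
by lrw_fold HLN (esym (mnat_ms a X)); lrw_fold HLN (mnat_nat f).
Qed.

End BulletNat.

Lemma bul_fun_id : bul_fun (mfid M) = gfid (bul_obj M).
Proof. by apply: gfun_ext => a X Y f /=; case: (mcat_lcat HM) => _ _ _ _ ->. Qed.

Lemma bul_nat_id (F : mfun M N) : bul_nat (mnid F) = gnid (bul_fun F).
Proof.
apply: functional_extensionality_dep => X; rewrite /bul_nat /mnid /gnid /=.
by case: HLN => _ _ _ -> _.
Qed.

Lemma bul_nat_vcomp (E F G : mfun M N) (t : mnat E F) (u : mnat F G) :
  bul_nat (mnvcomp u t) = gnvcomp (bul_nat u) (bul_nat t).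
Proof.
apply: functional_extensionality_dep => X; rewrite /bul_nat /mnvcomp /gnvcomp /=.
apply: lpack_inj; lnormalize HLN.
rewrite (mmuinv1lE HN 1%g (lfo (mf E) X) (erefl 1%g)).
lrw_fold HLN (mepsinv_nat HN (t X)).
lrw_fold HLN (mepsinv_nat HN (@mepsinv _ _ N (lfo (mf E) X))).
by rewrite (mepsinvK HN) (lmcomp_idr HLN); [|lside].
Qed.

End BulletMorphisms.

Lemma bul_fun_comp (M N P : mcat R H) (F : mfun M N) (G : mfun N P) :
  is_mcat M -> is_mcat N -> is_mcat P -> is_mfun F -> is_mfun G ->
  bul_fun (mfcomp G F) = gfcomp (bul_fun G) (bul_fun F).
Proof.
move=> HM HN HP HF HG; have HLP := mcat_lcat HP.
by apply: gfun_ext => a X Y f /=; apply: lpack_inj; lnormalize HLP.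
Qed.

Lemma bul_nat_hcomp (M N P : mcat R H) (F F' : mfun M N) (G G' : mfun N P)
    (t : mnat F F') (u : mnat G G') :
  is_mcat M -> is_mcat N -> is_mcat P ->
  is_mfun F -> is_mfun F' -> is_mfun G -> is_mfun G' ->
  bul_nat (mnhcomp u t) = gnhcomp (bul_nat u) (bul_nat t).
Proof.
move=> HM HN HP HF HF' HG HG'; have HLP := mcat_lcat HP; have HGl := mfun_lfun HG.
apply: functional_extensionality_dep => X; rewrite /bul_nat /mnhcomp /gnhcomp /=.
apply: lpack_inj; lnormalize HLP.
rewrite (mmuinv1lE HP 1%g (lfo (mf G) (lfo (mf F) X)) (erefl 1%g)).
lrw_fold HLP (mepsinv_nat HP (lfm (mf G) (t X))).
lrw_fold HLP (mepsinv_nat HP (lfm (mf G) (@mepsinv _ _ N (lfo (mf F) X)))).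
lrw_fold HLP (mepsinv_nat HP (ms G 1%g (lfo (mf F) X))).
rewrite (mepsinvK HP) (lmcomp_idr HLP); [|lside].
by rewrite (ms_unitinv HN HP HG).
Qed.

(** * The 2-natural isomorphism [nu] *)

Section Nu.
Variable M : mcat R H.
Hypothesis HM : is_mcat M.
Let HLM : is_lcat (mc M) := mcat_lcat HM.

(* The multiplication of [(C^bullet)^1] is the image of [mu] under
   [Hom(X, Y) ~ Hom^1(X, Y) : f |-> f o eps^-1]. *)
Lemma one_bul_mmu a b X :
  @lpack (mc M) _ _ (@mmu _ _ (one_obj (bul_obj M)) a b X) =
  lmcomp (lpack (@mmu _ _ M a b X)) (lpack (@mepsinv _ _ M (lfo (mact M a) (lfo (mact M b) X)))).
Proof.
rewrite /=; lnormalize HLM; rewrite (lmcomp_idl HLM); [|lside].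
lrw_fold HLM (mmu_mmuinvA HM (a * b)%g (b^-1)%g b X).
rewrite (mmuinv1rE HM _ _ (mulVg b)).
lrw_fold HLM (lfmor_compE (mcat_act HM (a * b)%g) (mepsinvK HM X) erefl).
rewrite (lfmor_id (mcat_act HM _)) (lmcomp_idl HLM); [|lside].
by rewrite (mulgK b a) (bul_shr_shrinv HM).
Qed.

Lemma nu_comp_mfun : is_mfun (nu_comp M).
Proof.
case: HLM => linl _ _ _ _; split.
- split => /=.
  + by move=> X Y k f f'; rewrite linl.
  + move=> X Y Z g f; apply: lpack_inj; lnormalize HLM.
    by rewrite (mmuinv1lE HM 1%g X (erefl 1%g)); lrw_fold HLM (esym (meps_nat HM f)).
  + by move=> X; apply: lpack_inj; lnormalize HLM; rewrite (mepsinvK HM).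
- move=> h; split.
  + move=> X Y f /=; apply: lpack_inj; lnormalize HLM.
    do 2 (rewrite (lmcomp_idl HLM); [|lside]); rewrite (lmcomp_idr HLM); [|lside].
    rewrite (mmuinv_bul_shrinvK HM); [|lside].
    by rewrite (mepsinvK HM) (lmcomp_idr HLM); [|lside].
  + by move=> X; exists (lid _); split; apply: lpack_inj; lnormalize HLM;
      rewrite (lmcomp_idl HLM).
- by move=> X /=; apply: lpack_inj; lnormalize HLM; rewrite !(lmcomp_idl HLM).
- move=> a b X /=; apply: lpack_inj; lnormalize HLM.
  do 3 (rewrite (lmcomp_idl HLM); [|lside]); rewrite (lmcomp_idr HLM); [|lside].
  lrw_fold HLM (mmu_mmuinvA HM (a * b)%g (b^-1)%g b X).
  rewrite (mmuinv1rE HM _ _ (mulVg b)).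
  lrw_fold HLM (lfmor_compE (mcat_act HM (a * b)%g) (mepsinvK HM X) erefl).
  rewrite (lfmor_id (mcat_act HM _)) (lmcomp_idl HLM); [|lside].
  rewrite (mulgK b a) (bul_shr_shrinvK HM); [|lside].
  by rewrite (mepsinvK HM) (lmcomp_idr HLM); [|lside].
Qed.

Definition nu_inv : mfun M (one_obj (bul_obj M)) :=
  @MFun _ _ M (one_obj (bul_obj M))
    (@LFun _ (mc M) (one_lcat (bul_obj M)) id
       (fun X Y (f : lhom (l:=mc M) X Y) => lcomp f (@mepsinv _ _ M X)))
    (fun h X => @mepsinv _ _ M (lfo (mact M h) X)).

Ltac mepsinv_push := rewrite (mepsinv_natK HM); [|lside|lside];
  rewrite ?(lsrc_fmor, ltgt_fmor, lsrc_pack, ltgt_pack).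

Lemma nu_inv_mfun : is_mfun nu_inv.
Proof.
have [HLob [HAob _]] := one_obj_mcat (bul_obj_gscat HM).
case: HLM => linl _ _ _ _; split.
- split => /=.
  + by move=> X Y k f f'; rewrite linl.
  + move=> X Y Z g f; apply: lpack_inj; lnormalize HLM.
    rewrite (mmuinv1lE HM 1%g X (erefl 1%g)).
    lrw_fold HLM (mepsinv_nat HM f); lrw_fold HLM (mepsinv_nat HM (@mepsinv _ _ M X)).
    by rewrite (mepsinvK HM) (lmcomp_idr HLM).
  + by move=> X; apply: lpack_inj; lnormalize HLM; rewrite (lmcomp_idl HLM).
- move=> h; split.
  + move=> X Y f /=; apply: lpack_inj; lnormalize HLM.
    rewrite (mmuinv1lE HM 1%g (lfo (mact M h) X) (erefl 1%g)).
    lrw_fold HLM (mepsinv_nat HM (@mepsinv _ _ M (lfo (mact M h) X))).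
    rewrite (mepsinvK HM) (lmcomp_idr HLM); [|lside].
    rewrite (lmcomp_idl HLM); [|lside]; do 6 mepsinv_push.
    rewrite (mepsinvK_eq HM); [|group_eq]; rewrite (mmuinv_bul_shrinvK HM); [|lside].
    lrw_fold HLM (lfmor_compE (mcat_act HM h) (mepsinvK HM X) erefl).
    rewrite (lfmor_id (mcat_act HM h)) (lmcomp_idl HLM); [|lside].
    by rewrite (lmcomp_idr HLM); [|lside].
  + move=> X; exists (@mepsinv _ _ M (lfo (mact M h) X)).
    split => /=; apply: (@lpack_inj (mc M)); lnormalize HLM;
      rewrite (mmuinv1lE HM 1%g (lfo (mact M h) X) (erefl 1%g));
      lrw_fold HLM (mepsinv_nat HM (@mepsinv _ _ M (lfo (mact M h) X)));
      by rewrite (mepsinvK HM) (lmcomp_idr HLM).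
- move=> X /=; apply: lpack_inj; lnormalize HLM.
  rewrite (lmcomp_idl HLM); [|lside]; rewrite (mmuinv1lE HM 1%g X (erefl 1%g)).
  by rewrite (mepsinvK HM) (mepsK HM).
- move=> a b X.
  have -> : forall k Z, ms nu_inv k Z = lid (l:=mc (one_obj (bul_obj M))) (lfo (mact M k) Z).
    by [].
  case: (HAob a) => [[_ _ ->] _]; case: HLob => _ _ _ idl idr; rewrite !idl !idr.
  by apply: (@lpack_inj (mc M)); rewrite one_bul_mmu /= lpack_comp.
Qed.

Lemma nu_comp_iso : exists G : mfun M (one_obj (bul_obj M)),
  [/\ is_mfun G, mfcomp (nu_comp M) G = mfid M &
      mfcomp G (nu_comp M) = mfid (one_obj (bul_obj M))].
Proof.
exists nu_inv; split; first exact: nu_inv_mfun.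
- rewrite /mfcomp /mfid /lfcomp /lfid /=; apply: mfun_ext.
  + do 3 apply: functional_extensionality_dep => ?; apply: lpack_inj; lnormalize HLM.
    by rewrite (mepsinvK HM) (lmcomp_idr HLM).
  + move=> h X; apply: lpack_inj; lnormalize HLM.
    by lrw_fold HLM (mepsinvK HM (lfo (mact M h) X)); rewrite (lmcomp_idl HLM).
- rewrite /mfcomp /mfid /lfcomp /lfid /=; apply: mfun_ext.
  + do 3 apply: functional_extensionality_dep => ?.
    apply: (@lpack_inj (mc M)); lnormalize HLM.
    by rewrite (mepsK HM) (lmcomp_idr HLM).
  + move=> h X /=; apply: (@lpack_inj (mc M)); lnormalize HLM.
    rewrite (lmcomp_idl HLM); [|lside].
    rewrite (mmuinv1lE HM 1%g (lfo (mact M h) X) (erefl 1%g)).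
    lrw_fold HLM (mepsinv_nat HM (@mepsinv _ _ M (lfo (mact M h) X))).
    by rewrite (mepsinvK HM) (lmcomp_idr HLM).
Qed.

End Nu.

Lemma nu_comp_nat (M N : mcat R H) (F : mfun M N) :
  is_mcat M -> is_mcat N -> is_mfun F ->
  mfcomp (nu_comp N) (one_fun (bul_fun F)) = mfcomp F (nu_comp M).
Proof.
move=> HM HN HF; have HLN := mcat_lcat HN; have HFl := mfun_lfun HF.
rewrite /mfcomp /lfcomp /=; apply: mfun_ext.
- apply: functional_extensionality_dep => X; do 2 apply: functional_extensionality_dep => ?.
  by apply: (@lpack_inj (mc N)); lnormalize HLN; lrw_fold HLN (ms_unit HF X).
- move=> h X /=; apply: (@lpack_inj (mc N)); lnormalize HLN.
  rewrite !(lmcomp_idl HLN); try lside.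
  rewrite (bul_shr_shrinvK HN); [|lside].
  lrw_fold HLN (mepsinvK HN (lfo (mact N h) (lfo (mf F) X))).
  by rewrite (lmcomp_idl HLN) ?(lmcomp_idr HLN) //; lside.
Qed.

Lemma nu_comp_2nat (M N : mcat R H) (E F : mfun M N) (t : mnat E F) :
  is_mcat M -> is_mcat N -> is_mfun E -> is_mfun F -> is_mnat t ->
  mnhcomp (mnid (nu_comp N)) (one_nat (bul_nat t)) = mnhcomp t (mnid (nu_comp M)).
Proof.
move=> HM HN HE HF Ht; have HLN := mcat_lcat HN; have HFl := mfun_lfun HF.
apply: functional_extensionality_dep => X.
rewrite /mnhcomp /mnid /one_nat /bul_nat /=; apply: (@lpack_inj (mc N)); lnormalize HLN.
by rewrite (lmcomp_idl HLN) ?(mepsinvK HN) //; lside.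
Qed.

(** * The 2-natural isomorphism [eta] *)

Section Eta.
Variables (C D : gscat R H).
Hypotheses (HC : is_gscat C) (HD : is_gscat D).
Let HCg : is_gcat C := proj1 HC.
Let HDg : is_gcat D := proj1 HD.

Lemma eta_comp_gfun : is_gfun (eta_comp C).
Proof.
case: HCg => linl _ _ _ _; split => /=.
- by move=> a X Y k f f'; rewrite linl gcast_linear.
- by move=> a b X Y Z g f; apply: gpack_inj; gsolve.
- by move=> X; apply: gpack_inj; gsolve.
Qed.

Definition eta_inv : gfun C (bul_obj (one_obj C)) :=
  @GFun _ _ C (bul_gcat (one_obj C)) id
    (fun h X Y (f : ghom (g:=C) h X Y) => gcast (mulgV h) (gcomp f (shrinv (gss C) h X))).

Lemma eta_inv_gfun : is_gfun eta_inv.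
Proof.
case: HCg => linl _ _ _ _; split => /=.
- by move=> a X Y k f f'; rewrite linl gcast_linear.
- by move=> a b X Y Z g f; apply: gpack_inj; gsolve.
- by move=> X; apply: gpack_inj; gsolve.
Qed.

Lemma eta_comp_iso : exists G : gfun C (bul_obj (one_obj C)),
  [/\ is_gfun G, gfcomp (eta_comp C) G = gfid C &
      gfcomp G (eta_comp C) = gfid (bul_obj (one_obj C))].
Proof.
exists eta_inv; split; first exact: eta_inv_gfun.
- by apply: gfun_ext => a X Y f /=; apply: gpack_inj; gsolve.
- by apply: gfun_ext => a X Y f /=; apply: gpack_inj; gsolve.
Qed.

Lemma eta_comp_nat (F : gfun C D) : is_gfun F ->
  gfcomp (eta_comp D) (bul_fun (one_fun F)) = gfcomp F (eta_comp C).
Proof. by move=> HF; apply: gfun_ext => a X Y f /=; apply: gpack_inj; gsolve. Qed.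

Lemma eta_comp_2nat (F G : gfun C D) (t : gnat F G) :
  is_gfun F -> is_gfun G -> is_gnat t ->
  gnhcomp (gnid (eta_comp D)) (bul_nat (one_nat t)) = gnhcomp t (gnid (eta_comp C)).
Proof.
move=> HF HG Ht; apply: functional_extensionality_dep => X.
by rewrite /gnhcomp /gnid /bul_nat /one_nat /=; apply: gpack_inj; gsolve.
Qed.

End Eta.

Lemma one_2functor : one_is_2functor R H.
Proof.
split; first by move=> *; apply: one_obj_mcat.
split; first by move=> *; apply: one_fun_mfun.
split; first by move=> *; apply: one_nat_mnat.
split; first by move=> *; apply: one_fun_id.
split; first by move=> *; apply: one_fun_comp.
(* [one_nat] is the identity on components, so the 2-cell laws hold by conversion. *)
by [].
Qed.

Lemma bul_2functor : bul_is_2functor R H.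
Proof.
split; first by move=> *; apply: bul_obj_gscat.
split; first by move=> *; apply: bul_fun_gfun.
split; first by move=> *; apply: bul_nat_gnat.
split; first by move=> *; apply: bul_fun_id.
split; first by move=> *; apply: bul_fun_comp.
split; first by move=> *; apply: bul_nat_id.
split; first by move=> *; apply: bul_nat_vcomp.
by move=> *; apply: bul_nat_hcomp.
Qed.

Lemma nu_2natiso : nu_is_2natiso R H.
Proof.
split; first by move=> *; apply: nu_comp_mfun.
- by move=> *; apply: nu_comp_iso.
- by move=> *; apply: nu_comp_nat.
- by move=> *; apply: nu_comp_2nat.
Qed.

Lemma eta_2natiso : eta_is_2natiso R H.
Proof.
split; first by move=> *; apply: eta_comp_gfun.
- by move=> *; apply: eta_comp_iso.
- by move=> *; apply: eta_comp_nat.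
- by move=> *; apply: eta_comp_2nat.
Qed.

End Equivalence.

Theorem mainTheorem17 (R : comNzRingType) (H : groupType) :
  one_is_2functor R H /\ bul_is_2functor R H /\
  nu_is_2natiso R H /\ eta_is_2natiso R H.
Proof.
split; first exact: one_2functor.
split; first exact: bul_2functor.
split; [exact: nu_2natiso | exact: eta_2natiso].
Qed.
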